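(* For every strict partition $\lambda$, $q_1(\lambda)=|\lambda|$.
   Context: A strict partition is a finite strictly decreasing sequence of positive integers $\lambda=(\lambda_1>\cdots>\lambda_\ell)$ (the empty sequence is allowed); $|\lambda|=\sum_i\lambda_i$, $\ell(\lambda)=\ell$. The (shifted Young) diagram of $\lambda$ is the set of boxes $(i,j)$ with $1\le i\le\ell(\lambda)$, $i+1\le j\le i+\lambda_i$ (row $i$, column $j$). An outer corner of $\lambda$ is a box of the diagram whose removal leaves the diagram of a strict partition. Let $(\alpha_1,\beta_1),\dots,(\alpha_m,\beta_m)$ be the outer corners with $\alpha_1>\cdots>\alpha_m$, $y_j=\beta_j-\alpha_j$; set $\alpha_{m+1}=0$, $\beta_0=\ell(\lambda)+1$, and $x_i=\beta_i-\alpha_{i+1}$ for $0\le i\le m$. Define $q_1(\lambda)=\sum_{i=0}^m\binom{x_i}{2}-\sum_{i=1}^m\binom{y_i}{2}$. *)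

From mathcomp Require Import all_boot all_order all_algebra.
From mathcomp Require Import boolp.
Set Implicit Arguments. Unset Strict Implicit. Unset Printing Implicit Defensive.
Import GRing.Theory Num.Theory.

Definition strict_partition (la : seq nat) : bool :=
  sorted gtn la && all (fun x => 0 < x) la.

(* lambda_i for 1 <= i <= size la *)
Definition part (la : seq nat) (i : nat) : nat := nth 0 la i.-1.

(* Shifted diagram: boxes (i,j) with 1 <= i <= l(la), i+1 <= j <= i + la_i. *)
Definition in_diagram (la : seq nat) (b : nat * nat) : bool :=
  [&& 1 <= b.1, b.1 <= size la, b.1 + 1 <= b.2 & b.2 <= b.1 + part la b.1].

Definition diagram (la : seq nat) : seq (nat * nat) :=
  flatten [seq [seq (i, j) | j <- iota (i + 1) (part la i)]
          | i <- rev (iota 1 (size la))].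

Definition outer_corner (la : seq nat) (b : nat * nat) : Prop :=
  in_diagram la b /\
  exists mu : seq nat, strict_partition mu /\
    forall p, in_diagram mu p = in_diagram la p && (p != b).

(* Outer corners (alpha_k, beta_k) listed with decreasing rows. *)
Definition outer_corners (la : seq nat) : seq (nat * nat) :=
  [seq b <- diagram la | `[< outer_corner la b >] ].

Definition binom2 (z : int) : int := ((z * (z - 1)) %/ 2)%Z.

(* q_1(la) = sum_{i=0}^m C(x_i,2) - sum_{i=1}^m C(y_i,2), where
   x_i = beta_i - alpha_{i+1}, beta_0 = l(la)+1, alpha_{m+1} = 0,
   y_j = beta_j - alpha_j. *)
Definition q1 (la : seq nat) : int :=
  let cs := outer_corners la in
  let alphas := [seq Posz b.1 | b <- cs] ++ [:: 0%R] in
  let betas := Posz (size la).+1 :: [seq Posz b.2 | b <- cs] in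
  let xs := [seq (p.1 - p.2)%R | p <- zip betas alphas] in
  let ys := [seq (Posz b.2 - Posz b.1)%R | b <- cs] in
  (\sum_(x <- xs) binom2 x - \sum_(y <- ys) binom2 y)%R.

From mathcomp Require Import all_boot all_order all_algebra.
From mathcomp Require Import boolp zify.
Set Implicit Arguments. Unset Strict Implicit. Unset Printing Implicit Defensive.
Import GRing.Theory Num.Theory.

(* The outer corners of a strict partition are the last boxes [(a, a + la_a)]
   of the rows [a] with [a = l(la)] or [la_(a+1) < la_a - 1].  Between two
   consecutive corner rows [alpha_(k+1) < alpha_k] the parts go down by exactly
   one, so rows [alpha_(k+1) + 1 .. alpha_k] hold [y_k, y_k + 1, ..., x_k - 1]
   and contribute [binom(x_k, 2) - binom(y_k, 2)] to [|la|].  Summing over the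
   blocks, with row [l(la) + 1] read as an empty row so that [x_0 = 1], gives
   [q_1(la) = |la|]. *)

Lemma binom2_nat n : binom2 (Posz n) = Posz 'C(n, 2).
Proof.
rewrite /binom2 bin2 -divn2; case: n => [//|n].
rewrite (_ : (Posz n.+1 - 1)%R = Posz n); last by rewrite -addn1 PoszD addrK.
by rewrite -PoszM divz_nat.
Qed.

Lemma sumn_takeS (s : seq nat) r : sumn (take r.+1 s) = sumn (take r s) + part s r.+1.
Proof.
rewrite /part /=; have [lt_r_s | le_s_r] := ltnP r (size s).
  by rewrite (take_nth 0 lt_r_s) sumn_rcons.
by rewrite !take_oversize ?nth_default ?addn0 // (leq_trans le_s_r).
Qed.

Lemma part_take s n r : 0 < r <= n -> part (take n s) r = part s r.
Proof. by case: r => // r /= lt_r_n; rewrite /part nth_take. Qed.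

Lemma part_set_nth s i v r : 0 < i -> 0 < r ->
  part (set_nth 0 s i.-1 v) r = if r == i then v else part s r.
Proof. by case: i r => [|i] [|r] //= _ _; rewrite /part nth_set_nth /= eqSS. Qed.

Lemma strict_partitionP s :
  reflect ((forall k, 0 < k < size s -> part s k.+1 < part s k) /\
           (forall k, 0 < k <= size s -> 0 < part s k))
          (strict_partition s).
Proof.
apply: (iffP andP) => [[sorted_s pos_s] | [decr_s pos_s]]; split.
- by case=> // k /= lt_k_s; apply: (sortedP 0 sorted_s).
- by case=> // k /= lt_k_s; apply: (all_nthP 0 pos_s).
- by apply/(sortedP 0) => k lt_k_s; apply: (decr_s k.+1).
- by apply/(all_nthP 0) => k lt_k_s; apply: (pos_s k.+1).
Qed.

Definition corner_row (la : seq nat) (i : nat) : bool :=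
  (i == size la) || ((part la i.+1).+1 < part la i).

Definition corner_rows (la : seq nat) (r : nat) : seq nat :=
  [seq i <- rev (iota 1 r) | corner_row la i].

Definition corner_free (la : seq nat) (r c : nat) : Prop :=
  forall j, r < j < c -> ~~ corner_row la j.

(* The [x]-part [\sum_i binom2 x_i] of [q1], with [beta_0 = b] and the corner
   rows [alpha_1 > alpha_2 > ...] given by [rows]. *)
Fixpoint gap_sum (la : seq nat) (b : int) (rows : seq nat) : int :=
  if rows is a :: rows' then (binom2 (b - Posz a) + gap_sum la (Posz (a + part la a)) rows')%R
  else binom2 b.

Lemma corner_rowsS la r :
  corner_rows la r.+1 =
    if corner_row la r.+1 then r.+1 :: corner_rows la r else corner_rows la r.
Proof. by rewrite /corner_rows -[r.+1]addn1 iotaD rev_cat /= add1n addn1. Qed.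

Lemma corner_rows_gap_sum la rows :
  (\sum_(x <- [seq (p.1 - p.2)%R
               | p <- zip (Posz (size la).+1 :: [seq Posz (a + part la a) | a <- rows])
                          ([seq Posz a | a <- rows] ++ [:: 0%R])]) binom2 x)%R
  = gap_sum la (size la).+1 rows.
Proof.
elim: rows (Posz (size la).+1) => [|a rows IH] b /=; rewrite big_cons ?IH //.
by rewrite big_nil subr0 addr0.
Qed.

Section StrictPartition.

Variable la : seq nat.
Hypothesis la_strict : strict_partition la.

Lemma part_gt0 i : 0 < i <= size la -> 0 < part la i.
Proof. by case/strict_partitionP: la_strict => _; apply. Qed.

Lemma part_ltS i : 0 < i < size la -> part la i.+1 < part la i.
Proof. by case/strict_partitionP: la_strict => + _; apply. Qed.

Lemma part_corner_free r c d : c <= (size la).+1 -> corner_free la r c ->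
  d < c - r -> part la (c - d) = part la c + d.
Proof.
move=> le_c_la free_rc; elim: d => [|d IH] lt_d; first by rewrite subn0 addn0.
have row_d : r < c - d.+1 < c by lia.
have := free_rc _ row_d; rewrite /corner_row negb_or => /andP[/eqP not_last].
have := @part_ltS (c - d.+1); have -> : (c - d.+1).+1 = c - d by lia.
by rewrite IH; lia.
Qed.

Lemma sumn_take_corner_free r c : r < c -> c <= (size la).+1 -> corner_free la r c ->
  sumn (take c la) + 'C(part la c, 2) = sumn (take r la) + 'C(c - r + part la c, 2).
Proof.
move=> lt_r_c le_c_la free_rc.
suff /(_ (c - r) (leqnn _)) : forall d, d <= c - r ->
    sumn (take c la) + 'C(part la c, 2) = sumn (take (c - d) la) + 'C(d + part la c, 2).
  by rewrite subKn // ltnW.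
elim=> [|d IH] le_d; first by rewrite subn0.
have split_d : c - d = (c - d.+1).+1 by lia.
rewrite IH 1?ltnW // {1}split_d sumn_takeS -split_d.
by rewrite (@part_corner_free r c d) // addSn binS bin1; lia.
Qed.

Lemma gap_sum_corner_rows r c : r < c -> c <= (size la).+1 -> corner_free la r c ->
  (gap_sum la (Posz (c + part la c)) (corner_rows la r)
     - \sum_(a <- corner_rows la r) binom2 (Posz (part la a)))%R
  = Posz (sumn (take c la) + 'C(part la c, 2)).
Proof.
elim: r c => [|r IH] c lt_r_c le_c_la free_rc.
  rewrite /corner_rows /= big_nil subr0 binom2_nat (sumn_take_corner_free lt_r_c) //.
  by rewrite take0 subn0.
rewrite corner_rowsS; case: ifP => [corner_r | non_corner_r]; last first.
  apply: IH => // [|j /andP[lt_r_j lt_j_c]]; first lia.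
  by have [-> | ne_j] := eqVneq j r.+1; [rewrite non_corner_r | apply: free_rc; lia].
have free_r : corner_free la r r.+1 by move=> j; lia.
have IHr := IH r.+1 (ltnSn r) (leq_trans (ltnW lt_r_c) le_c_la) free_r.
rewrite /= big_cons subzn; last lia.
rewrite binom2_nat binom2_nat.
have -> : c + part la c - r.+1 = c - r.+1 + part la c by lia.
have := sumn_take_corner_free lt_r_c le_c_la free_rc.
move: IHr; set gaps := gap_sum _ _ _; set rows := (\sum_(_ <- _) _)%R; lia.
Qed.

Lemma outer_corner_row_end i j : in_diagram la (i, j) -> outer_corner la (i, j) ->
  (j == i + part la i) && corner_row la i.
Proof.
rewrite /in_diagram /= => /and4P[i_gt0 le_i_la lt_i_j le_j_row] [_ [mu [mu_strict mu_la]]].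
have /strict_partitionP [mu_decr _] := mu_strict.
have j_end : j = i + part la i.
  apply/eqP; rewrite eqn_leq le_j_row /=; apply/negP => lt_j_row.
  by have := mu_la (i, j.+1); have := mu_la (i, j); rewrite /in_diagram /= !xpair_eqE; lia.
rewrite j_end eqxx /corner_row; apply/negPn/negP => non_corner.
have lt_i_la : i < size la by lia.
have := @part_ltS i; have := @part_gt0 i.+1.
have := mu_la (i.+1, i.+1 + part la i.+1); have := mu_la (i, i + part la i).
rewrite /in_diagram /= !xpair_eqE => in_mu_i in_mu_iS.
have [lt_i_mu | ] := ltnP i (size mu); last lia.
by have := mu_decr i; lia.
Qed.

Lemma outer_corner_take i : part la i = 1 -> corner_row la i ->
  0 < i <= size la -> outer_corner la (i, i + part la i).
Proof.
move=> row_1 corner_i le_i_la.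
have i_last : i = size la by move: corner_i; rewrite /corner_row row_1; case: eqP => // _; lia.
split; first by rewrite /in_diagram /=; lia.
exists (take (size la).-1 la).
have size_mu : size (take (size la).-1 la) = (size la).-1 by rewrite size_takel // leq_pred.
split.
  apply/strict_partitionP; rewrite size_mu; split => k lt_k_mu.
    by rewrite !part_take ?part_ltS //; lia.
  by rewrite part_take ?part_gt0 //; lia.
case=> r c; rewrite /in_diagram /= size_mu xpair_eqE.
have [le_r_mu | ] := leqP r (size la).-1; last by case: (eqVneq r i) => [-> | ]; lia.
by case: (posnP r) => [-> // | r_gt0]; rewrite part_take //; lia.
Qed.

Lemma outer_corner_set_nth i : part la i != 1 -> corner_row la i ->
  0 < i <= size la -> outer_corner la (i, i + part la i).
Proof.
move=> row_gt1 corner_i le_i_la; have /andP[i_gt0 _] := le_i_la.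
split; first by rewrite /in_diagram /=; have := @part_gt0 i; lia.
exists (set_nth 0 la i.-1 (part la i).-1).
have size_mu : size (set_nth 0 la i.-1 (part la i).-1) = size la.
  by rewrite size_set_nth; lia.
split.
  apply/strict_partitionP; rewrite size_mu; split => k lt_k_la.
    have /andP[k_gt0 _] := lt_k_la.
    rewrite !part_set_nth ?eqSS //.
    have := @part_ltS k lt_k_la.
    have [<- | _] := eqVneq k.+1 i; first by rewrite ltn_eqF //; lia.
    have [k_i | //] := eqVneq k i.
    by move: corner_i; rewrite /corner_row -k_i; lia.
  have /andP[k_gt0 _] := lt_k_la.
  rewrite part_set_nth //.
  by have [_ | _] := eqVneq k i; [have := part_gt0 le_i_la; lia | apply: part_gt0].
case=> r c; rewrite /in_diagram /= size_mu xpair_eqE.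
case: (posnP r) => [-> // | r_gt0].
rewrite part_set_nth //; have := part_gt0 le_i_la.
by case: (eqVneq r i) => [-> | _]; lia.
Qed.

Lemma outer_cornerE i j : in_diagram la (i, j) ->
  `[< outer_corner la (i, j) >] = (j == i + part la i) && corner_row la i.
Proof.
move=> box_ij; apply/idP/idP => [/asboolP | /andP[/eqP -> corner_i]].
  exact: outer_corner_row_end.
move: box_ij; rewrite /in_diagram /= => /and4P[i_gt0 le_i_la _ _].
have le_i : 0 < i <= size la by rewrite i_gt0.
apply/asboolP; have [row_1 | row_gt1] := eqVneq (part la i) 1.
  exact: outer_corner_take.
exact: outer_corner_set_nth.
Qed.

Lemma outer_cornersE :
  outer_corners la = [seq (i, i + part la i) | i <- corner_rows la (size la)].
Proof.
rewrite /outer_corners /diagram /corner_rows filter_flatten -map_comp.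
transitivity (flatten [seq if corner_row la i then [:: (i, i + part la i)] else [::]
                      | i <- rev (iota 1 (size la))]); last first.
  by elim: (rev _) => //= i rows ->; case: (corner_row la i).
congr flatten; apply/eq_in_map => i; rewrite mem_rev mem_iota => /andP[i_gt0 le_i_la] /=.
rewrite filter_map (@eq_in_filter _ _ (fun j => (j == i + part la i) && corner_row la i)).
  case: (corner_row la i); last first.
    by rewrite (eq_filter (a2 := pred0)) ?filter_pred0 // => j; rewrite andbF.
  rewrite (eq_filter (a2 := pred1 (i + part la i))) => [|j]; last by rewrite andbT.
  rewrite filter_pred1_uniq ?iota_uniq // mem_iota.
  by have := @part_gt0 i; lia.
move=> j; rewrite mem_iota => box_j; apply: outer_cornerE.
by rewrite /in_diagram /=; lia.
Qed.

Lemma q1E : q1 la = (gap_sum la (size la).+1 (corner_rows la (size la))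
  - \sum_(a <- corner_rows la (size la)) binom2 (Posz (part la a)))%R.
Proof.
rewrite /q1 outer_cornersE -!map_comp corner_rows_gap_sum big_map.
congr (_ - _)%R; apply: eq_bigr => a _ /=.
by rewrite subzn ?leq_addr // addKn.
Qed.

End StrictPartition.

Theorem lemma4p2 (la : seq nat) :
  strict_partition la -> q1 la = ((sumn la)%:Z)%R.
Proof.
move=> la_strict; rewrite q1E //.
have row_past_end : part la (size la).+1 = 0 by rewrite /part nth_default.
have free_past_end : corner_free la (size la) (size la).+1 by move=> j; lia.
have := gap_sum_corner_rows la_strict (ltnSn _) (leqnn _) free_past_end.
by rewrite row_past_end !addn0 take_oversize.
Qed.
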